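(* Let $Q$ be a CAT(0) planar graph. Any combinatorial geodesic is a path of shortest directed distance between its endpoints: if $\gamma$ is a path from $u$ to $v$ with the minimal number $\ell(u,v)$ of edges, then the directed length of $\gamma$ equals $\delta(u,v)$.
   Context: A CAT(0) planar graph is a nonempty connected finite directed plane graph whose interior faces are triangles with edges forming directed 3-cycles, whose interior vertices have degree at least 6, and in which every edge and vertex lies on the perimeter of some face. Directed length of a path: each edge traversed along its orientation costs 1, against it costs 2; $\delta(u,v)$ is the minimal directed length of a walk from $u$ to $v$. The combinatorial distance $\ell(u,v)$ is the minimal number of edges of a path ignoring orientations; a path achieving it is a combinatorial geodesic. *)

(* Plane graphs are represented combinatorially by a
   combinatorial map (rotation system): darts, a fixed-point-free involution
   [alpha] (the two darts of an edge), a vertex rotation [sigma] whose orbits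
   are the darts around a vertex, and faces = orbits of [sigma \o alpha].
   Planarity = Euler's formula V - E + F = 2 (for connected maps).  *)
From mathcomp Require Import all_boot.


Record plane_digraph := PlaneDigraph {
  pV : finType;
  pD : finType;
  ptail : pD -> pV;
  palpha : pD -> pD;
  psigma : pD -> pD;
  porient : pD -> bool;       (* true iff the edge is oriented tail -> head along this dart *)
  pouter : pD                 (* a dart on the boundary walk of the outer face *)
}.

Section Defs.
Variable G : plane_digraph.
Local Notation V := (pV G).
Local Notation D := (pD G).
Local Notation tail := (@ptail G).
Local Notation alpha := (@palpha G).
Local Notation sigma := (@psigma G).

Definition phead (d : D) : V := tail (alpha d).
Definition pphi (d : D) : D := sigma (alpha d).

Definition adj : rel V := fun u v => [exists d : D, (tail d == u) && (phead d == v)].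

Definition outer_dart (d : D) : bool := fconnect pphi (@pouter G) d.
Definition interior_dart (d : D) : bool := ~~ outer_dart d.

Definition num_faces : nat := #|[pred d : D | froot pphi d == d]|.
Definition num_edges : nat := #|D| %/ 2.
Definition degree (v : V) : nat := #|[pred d : D | tail d == v]|.
Definition interior_vertex (v : V) : bool := [forall d : D, outer_dart d ==> (tail d != v)].

Definition is_plane_map : Prop :=
  (forall d, alpha (alpha d) = d) /\ (forall d, alpha d != d) /\
  injective sigma /\
  (forall d, tail (sigma d) = tail d) /\
  (forall d d', tail d = tail d' -> fconnect sigma d d') /\
  (forall d, @porient G (alpha d) = ~~ @porient G d).

Definition is_simple : Prop :=
  (forall d, tail d != phead d) /\
  (forall d d', tail d = tail d' -> phead d = phead d' -> d = d').

Definition is_connected : Prop := forall u v : V, connect adj u v.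

Definition euler_planar : Prop := (#|V| + num_faces = num_edges + 2)%N.

Definition is_CAT0_planar : Prop :=
  is_plane_map /\ is_simple /\ is_connected /\ euler_planar /\
  (* interior faces are triangles whose edges form a directed 3-cycle *)
  (forall d, interior_dart d ->
     order pphi d = 3 /\ @porient G (pphi d) = @porient G d) /\
  (forall v, interior_vertex v -> 6 <= degree v) /\
  (forall d, interior_dart d || interior_dart (alpha d)) /\
  (forall v, exists d, (tail d == v) && interior_dart d).

Fixpoint is_walk (u v : V) (p : seq D) : bool :=
  if p is d :: p' then (tail d == u) && is_walk (phead d) v p' else u == v.

Definition dlength (p : seq D) : nat :=
  sumn [seq (if @porient G d then 1 else 2) | d <- p].

Definition is_delta (u v : V) (k : nat) : Prop :=
  (exists q, is_walk u v q /\ dlength q = k) /\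
  (forall q, is_walk u v q -> k <= dlength q).

Definition comb_geodesic (u v : V) (p : seq D) : Prop :=
  is_walk u v p /\ forall q, is_walk u v q -> size p <= size q.

End Defs.

From mathcomp Require Import all_boot zify.
Set Implicit Arguments. Unset Strict Implicit. Unset Printing Implicit Defensive.

(* Reversing a walk [p] turns its directed length into [3 |p| - dlength p].
   It therefore suffices that every round trip [x -> y -> x] of directed
   length [L] yields a walk [x -> y] with at most [L / 3] edges: applied to a
   walk [q : u -> v] and to the reversed geodesic [p], this gives a walk [p']
   with [3 |p| <= 3 |p'| <= dlength q + 3 |p| - dlength p].

   The round-trip bound is proved by induction on the number of vertices,
   for simple plane maps whose interior faces are directed triangles, whose
   interior vertices have degree at least 6, and which satisfy
   [6 |V| = 6 + |D| + 2 #outer darts].  This relation says that the charges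
   [deg v + 2 #(outer darts at v)] add up to [6 |V| - 6], whereas every vertex
   has charge at least 6 unless it is a leaf or removable (one outer dart,
   degree at most 3).  Hence some removable vertex [w] differs from [x] and
   [y], or [x] is a leaf.  The class is closed under deleting a removable
   vertex, and a walk passing through [w] can be rerouted along the rims of
   the (at most two) triangles at [w] at no extra cost, because they are
   directed 3-cycles.  In the leaf case both walks use the leaf edge and [x]
   itself is deleted. *)

(** * Walks and directed length *)

Section Walks.
Variable G : plane_digraph.
Local Notation D := (pD G).

Definition dcost (d : D) : nat := if porient G d then 1 else 2.

Lemma dlength_cons d p : dlength G (d :: p) = dcost d + dlength G p.
Proof. by []. Qed.

Lemma dlength_seq1 d : dlength G [:: d] = dcost d.
Proof. exact: addn0. Qed.

Lemma dlength_cat p q : dlength G (p ++ q) = dlength G p + dlength G q.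
Proof. by rewrite /dlength map_cat sumn_cat. Qed.

Lemma dcost_gt0 d : 0 < dcost d. Proof. by rewrite /dcost; case: porient. Qed.
Lemma dcost_le2 d : dcost d <= 2. Proof. by rewrite /dcost; case: porient. Qed.

Lemma tail_alpha d : ptail G (palpha G d) = phead G d.
Proof. by []. Qed.

Lemma walk_cat u m v p q :
  is_walk G u m p -> is_walk G m v q -> is_walk G u v (p ++ q).
Proof.
elim: p u => [|d p IH] u /=; first by move/eqP->.
by case/andP=> -> /IH W /W.
Qed.

Lemma walk_cat_split u v p q :
  is_walk G u v (p ++ q) -> exists m, is_walk G u m p /\ is_walk G m v q.
Proof.
elim: p u => [|d p IH] u /=; first by exists u; rewrite eqxx.
by case/andP=> /eqP <- /IH [m [W1 W2]]; exists m; rewrite eqxx W1.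
Qed.

Lemma adj_path_walk (x : pV G) s :
  path (adj G) x s -> exists q, is_walk G x (last x s) q.
Proof.
elim: s x => [|y s IH] x /=; first by exists [::]; rewrite /= eqxx.
case/andP=> /existsP [d /andP [/eqP tx /eqP hy]] /IH [q W].
by exists (d :: q); rewrite /= tx eqxx hy.
Qed.

End Walks.

(** * Nonpositively curved plane maps *)

(* [6 |V| = 6 + |D| + 2 #outer darts] is Euler's formula once every interior
   face is a triangle; unlike Euler's formula, it survives the deletion of a
   removable boundary vertex. *)
Record npc_map (G : plane_digraph) : Prop := NpcMap {
  alphaK : involutive (palpha G);
  sigma_inj : injective (psigma G);
  tail_sigma : forall d, ptail G (psigma G d) = ptail G d;
  tail_fconnect : forall d d', ptail G d = ptail G d' -> fconnect (psigma G) d d';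
  orient_alpha : forall d, porient G (palpha G d) = ~~ porient G d;
  tail_neq_head : forall d, ptail G d != phead G d;
  dart_ends_inj : forall d d', ptail G d = ptail G d' -> phead G d = phead G d' -> d = d';
  walk_connected : forall u v : pV G, exists q, is_walk G u v q;
  euler_relation : 6 * #|pV G| = 6 + #|pD G| + 2 * #|[pred d | outer_dart G d]|;
  interior_triangle : forall d, interior_dart G d ->
    order (pphi G) d = 3 /\ porient G (pphi G d) = porient G d;
  interior_degree : forall v, interior_vertex G v -> 6 <= degree G v
}.

Section NpcMap.
Variable G : plane_digraph.
Hypothesis gG : npc_map G.
Local Notation D := (pD G).
Local Notation tail := (ptail G).
Local Notation alpha := (palpha G).
Local Notation head := (phead G).
Local Notation phi := (pphi G).

Lemma alpha_inj : injective alpha.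
Proof. exact: inv_inj (alphaK gG). Qed.

Lemma phi_inj : injective phi.
Proof. by move=> x y /(sigma_inj gG) /alpha_inj. Qed.

Lemma head_alpha d : head (alpha d) = tail d.
Proof. by rewrite /phead alphaK. Qed.

Lemma tail_phi d : tail (phi d) = head d.
Proof. exact: tail_sigma. Qed.

Lemma dcost_alpha d : dcost (alpha d) + dcost d = 3.
Proof. by rewrite /dcost orient_alpha //; case: porient. Qed.

Definition rev_walk (p : seq D) : seq D := rev (map alpha p).

Lemma walk_rev u v p : is_walk G u v p -> is_walk G v u (rev_walk p).
Proof.
elim: p u => [|d p IH] u /=; first by move/eqP->; rewrite /= eqxx.
case/andP=> /eqP <- /IH W; rewrite /rev_walk /= rev_cons -cats1.
by apply: walk_cat W _; rewrite /= head_alpha !eqxx.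
Qed.

Lemma dlength_rev_walk p : dlength G (rev_walk p) + dlength G p = 3 * size p.
Proof.
elim: p => //= d p IH.
rewrite /rev_walk /= rev_cons -cats1 dlength_cat -/(rev_walk p).
rewrite dlength_seq1 dlength_cons; have := dcost_alpha d; lia.
Qed.

Lemma outer_phi d : outer_dart G (phi d) = outer_dart G d.
Proof. by rewrite /outer_dart -same_fconnect1_r //; apply: phi_inj. Qed.

Lemma interior_phi d : interior_dart G (phi d) = interior_dart G d.
Proof. by rewrite /interior_dart outer_phi. Qed.

Lemma outer_fconnect d d' : outer_dart G d -> outer_dart G d' -> fconnect phi d d'.
Proof.
rewrite /outer_dart (fconnect_sym phi_inj) => Od Od'.
exact: connect_trans Od Od'.
Qed.

Lemma phi3 d : interior_dart G d -> phi (phi (phi d)) = d.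
Proof.
by case/(interior_triangle gG) => o3 _; have := iter_order phi_inj d; rewrite o3.
Qed.

Lemma tail_iter_sigma n d : tail (iter n (psigma G) d) = tail d.
Proof. by elim: n => //= n IH; rewrite tail_sigma. Qed.

End NpcMap.

Section EulerRelation.
Variable G : plane_digraph.
Local Notation D := (pD G).
Local Notation alpha := (palpha G).
Local Notation phi := (pphi G).

Lemma card_darts_even : involutive alpha -> (forall d, alpha d != d) ->
  #|D| = 2 * num_edges G.
Proof.
move=> aK afix; have aI := inv_inj aK.
have cardT : #|[pred _ : D | true]| = #|D| by apply: eq_card.
rewrite /num_edges -cardT -(@fcard_order_set _ _ aI 2 [pred _ | true]) //.
  by rewrite mulnK // mulnC.
apply/subsetP=> d _; rewrite inE; apply/eqP.
apply: (@order_cycle _ _ [:: d; alpha d]); rewrite ?mem_head //=.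
  by rewrite aK !eqxx.
by rewrite inE andbT eq_sym afix.
Qed.

Lemma num_faces_triangles : injective phi ->
  (forall d, interior_dart G d -> order phi d = 3) ->
  3 * num_faces G + #|[pred d | outer_dart G d]| = 3 + #|D|.
Proof.
move=> phiI tri; set A := fconnect phi (pouter G).
have -> : num_faces G = fcard phi D by apply: eq_card => d; rewrite !inE andbT.
have -> : #|[pred d | outer_dart G d]| = #|A| by apply: eq_card.
rewrite -(cardC A) (n_compC A) (n_comp_connect (fconnect_sym phiI)) mulnDr.
rewrite [3 * fcard _ _]mulnC (@fcard_order_set _ _ phiI 3).
  by rewrite muln1 -addnA [#|A| + _]addnC.
- by apply/subsetP=> d; rewrite !inE => Id; apply/eqP/tri.
- exact: predC_closed (connect_closed (fconnect_sym phiI) _).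
Qed.

End EulerRelation.

Lemma CAT0_planar_npc_map G : is_CAT0_planar G -> npc_map G.
Proof.
case=> [[aK [afix [sI [tailS [sconn orA]]]]] [[noloop simple] [conn [euler [tri [deg _]]]]]].
have phiI : injective (pphi G) by move=> x y /sI /(inv_inj aK).
have F := num_faces_triangles phiI (fun d Id => (tri d Id).1).
have E := card_darts_even aK afix.
constructor => //.
- by move=> u v; have /connectP [s /adj_path_walk W ->] := conn u v.
- by move: euler F E; rewrite /euler_planar; lia.
Qed.

(** * Curvature and removable vertices *)

Lemma card_neq2 (T : finType) (x y : T) : x != y ->
  #|[pred v | (v != x) && (v != y)]| + 2 = #|T|.
Proof.
move=> xy; rewrite [#|T|](cardD1 x) [#|[predD1 T & x]|](cardD1 y) !inE eq_sym xy.
by rewrite addn2 !add1n; congr _.+2; apply: eq_card => v; rewrite !inE andbT andbC.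
Qed.

Section Charge.
Variable G : plane_digraph.
Hypothesis gG : npc_map G.
Local Notation V := (pV G).
Local Notation D := (pD G).
Local Notation tail := (ptail G).

Definition outer_degree (v : V) : nat := #|[pred d | (tail d == v) && outer_dart G d]|.
Definition charge (v : V) : nat := degree G v + 2 * outer_degree v.
Definition removable (w : V) : bool := (outer_degree w == 1) && (degree G w <= 3).

Lemma sum_card_tail (P : pred D) :
  \sum_(v : V) #|[pred d | (tail d == v) && P d]| = #|[pred d | P d]|.
Proof.
rewrite -sum1_card (partition_big tail xpredT) //=.
by apply: eq_bigr => v _; rewrite -sum1_card; apply: eq_bigl => d; rewrite !inE andbC.
Qed.

Lemma sum_charge : \sum_(v : V) charge v + 6 = 6 * #|V|.
Proof.
rewrite big_split /= -big_distrr /= (sum_card_tail (outer_dart G)) (euler_relation gG).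
have -> : \sum_(v : V) degree G v = #|D|.
  rewrite -[RHS](sum_card_tail xpredT).
  by apply: eq_bigr => v _; apply: eq_card => d; rewrite !inE andbT.
by rewrite addnC addnA.
Qed.

Lemma outer_degree_le v : outer_degree v <= degree G v.
Proof. by apply: subset_leq_card; apply/subsetP => d; rewrite !inE => /andP []. Qed.

Lemma outer_degree0_interior v : outer_degree v = 0 -> interior_vertex G v.
Proof.
move=> od0; apply/forallP => d; apply/implyP => Od; apply/negP => /eqP tv.
by move: od0; apply/eqP; rewrite -lt0n; apply/card_gt0P; exists d; rewrite !inE tv eqxx Od.
Qed.

Lemma charge_ge6 v : ~~ removable v -> 6 <= charge v.
Proof.
rewrite /removable /charge; have := outer_degree_le v.
case E: (outer_degree v) => [|[|c]] /= le_od.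
- by have := interior_degree gG (outer_degree0_interior E); lia.
- by rewrite -ltnNge; lia.
- by lia.
Qed.

Lemma charge_ge3 v : 0 < degree G v -> 3 <= charge v.
Proof.
rewrite /charge; case E: (outer_degree v) => [|c] deg_gt0; last by lia.
by have := interior_degree gG (outer_degree0_interior E); lia.
Qed.

Lemma charge3_leaf v : charge v = 3 -> degree G v = 1 /\ outer_degree v = 1.
Proof.
rewrite /charge; case E: (outer_degree v) => [|c] ch3; last by have := outer_degree_le v; lia.
by have := interior_degree gG (outer_degree0_interior E); lia.
Qed.

Lemma degree_gt0 x y : x != y -> 0 < degree G x.
Proof.
move=> xy; have [[|d q] W] := walk_connected gG x y.
  by move: W xy => /= /eqP ->; rewrite eqxx.
by apply/card_gt0P; exists d; rewrite inE; case/andP: W.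
Qed.

Lemma removable_or_leaf x y : x != y ->
  (exists w, [/\ removable w, w != x & w != y]) \/
  (degree G x = 1 /\ outer_degree x = 1).
Proof.
move=> xy; case: (boolP [exists w, [&& removable w, w != x & w != y]]).
  by case/existsP=> w /and3P [Rw wx wy]; left; exists w.
move/existsPn=> none; right; apply: charge3_leaf.
have rest : 6 * #|[pred v | (v != x) && (v != y)]| <=
            \sum_(v | (v != x) && (v != y)) charge v.
  rewrite mulnC -sum_nat_const; apply: leq_sum => v /andP [vx vy].
  by apply: charge_ge6; move: (none v); rewrite vx vy !andbT.
have := sum_charge; rewrite (bigD1 x) // (bigD1 y) /=; last by rewrite eq_sym.
have yx : y != x by rewrite eq_sym.
have := charge_ge3 (degree_gt0 xy); have := charge_ge3 (degree_gt0 yx).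
have := card_neq2 xy.
set S := \sum_(v | _) charge v in rest *; set K := #|_| in rest *; lia.
Qed.

End Charge.

(** * Deleting a removable vertex *)

Lemma card_sig_pred (T : finType) (P Q : pred T) :
  #|[pred x : {x | P x} | Q (val x)]| = #|[pred x | P x && Q x]|.
Proof.
rewrite -(card_image val_inj); apply: eq_card => x; rewrite inE.
apply/imageP/andP => [[y Qy ->]|[Px Qx]]; first by split; [exact: valP|].
by exists (Sub x Px); rewrite // inE SubK.
Qed.

Section RemovableVertex.
Variable G : plane_digraph.
Hypothesis gG : npc_map G.
Local Notation V := (pV G).
Local Notation D := (pD G).
Local Notation tail := (ptail G).
Local Notation alpha := (palpha G).
Local Notation sigma := (psigma G).
Local Notation orient := (porient G).
Local Notation head := (phead G).
Local Notation phi := (pphi G).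
Local Notation outer := (outer_dart G).

Variables (w : V) (o : D).
Hypothesis tail_o : tail o = w.
Hypothesis outer_o : outer o.
Hypothesis outer_at_w : forall d, tail d = w -> outer d -> d = o.
Hypothesis degree_w : degree G w <= 3.
Local Notation k := (degree G w).

(* The darts out of [w] are [spoke 0 = o, ..., spoke k.-1]; for [0 < i < k]
   the interior triangle [spoke i, rim i, alpha (spoke i.-1)] joins
   [nbr i] to [nbr i.-1]. *)
Definition spoke i : D := iter i sigma o.
Arguments spoke : simpl never.
Definition nbr i : V := head (spoke i).
Definition rim i : D := phi (spoke i).
Definition o_in : D := alpha (spoke k.-1).
Definition kept (d : D) : bool := (tail d != w) && (head d != w).

Lemma tail_spoke i : tail (spoke i) = w.
Proof. by rewrite /spoke tail_iter_sigma. Qed.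

Lemma fconnect_spoke d : fconnect sigma o d = (tail d == w).
Proof.
apply/idP/eqP => [F|td]; last by apply: (tail_fconnect gG); rewrite tail_o td.
rewrite -tail_o; apply/esym/(fconnect_invariant _ F) => x.
by rewrite /= (tail_sigma gG) eqxx.
Qed.

Lemma order_spoke : order sigma o = k.
Proof. by apply: eq_card => d; rewrite !inE fconnect_spoke. Qed.

Lemma degree_w_gt0 : 0 < k.
Proof. by rewrite -order_spoke order_gt0. Qed.

Lemma spoke_of_tail d : tail d = w -> exists2 i, i < k & d = spoke i.
Proof.
move=> td; have F : fconnect sigma o d by rewrite fconnect_spoke td.
exists (findex sigma o d); first by rewrite -order_spoke findex_max.
by rewrite /spoke iter_findex.
Qed.

Lemma spoke_inj i j : i < k -> j < k -> spoke i = spoke j -> i = j.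
Proof.
rewrite -order_spoke => ik jk E.
by rewrite -(findex_iter ik) -(findex_iter jk) -/(spoke i) -/(spoke j) E.
Qed.

Lemma spoke_k : spoke k = o.
Proof. by rewrite /spoke -order_spoke iter_order //; apply: (sigma_inj gG). Qed.

Lemma outer_spoke i : i < k -> outer (spoke i) = (i == 0).
Proof.
case: i => [|i] ik; first exact: outer_o.
by apply/negP => /(outer_at_w (tail_spoke _)) /(spoke_inj ik degree_w_gt0).
Qed.

Lemma nbr_neq_w i : nbr i != w.
Proof. by rewrite /nbr -(tail_spoke i) eq_sym tail_neq_head. Qed.

Lemma nbr_inj i j : i < k -> j < k -> nbr i = nbr j -> i = j.
Proof.
move=> ik jk E; apply: spoke_inj => //.
by apply: (dart_ends_inj gG) => //; rewrite !tail_spoke.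
Qed.

Section Triangle.
Variable i : nat.
Hypotheses (i_gt0 : 0 < i) (i_lt_k : i < k).

Lemma interior_spoke : interior_dart G (spoke i).
Proof. by rewrite /interior_dart outer_spoke //; case: i i_gt0. Qed.

Lemma interior_rim : interior_dart G (rim i).
Proof. by rewrite /rim interior_phi // interior_spoke. Qed.

Lemma phi_rim : phi (rim i) = alpha (spoke i.-1).
Proof.
have := phi3 gG interior_spoke; rewrite -/(rim i).
case: i i_gt0 => // j _; rewrite /spoke iterS => /(sigma_inj gG) <-.
by rewrite /pphi alphaK.
Qed.

Lemma tail_rim : tail (rim i) = nbr i.
Proof. exact: tail_phi. Qed.

Lemma head_rim : head (rim i) = nbr i.-1.
Proof. by rewrite -(tail_phi gG) phi_rim. Qed.

Lemma orient_rim : orient (rim i) = orient (spoke i).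
Proof. by case: (interior_triangle gG interior_spoke). Qed.

Lemma orient_spoke_pred : orient (spoke i.-1) = ~~ orient (spoke i).
Proof.
case: (interior_triangle gG interior_rim) => _.
by rewrite phi_rim orient_alpha // orient_rim => <-; rewrite negbK.
Qed.

Lemma kept_rim : kept (rim i).
Proof. by rewrite /kept tail_rim head_rim !nbr_neq_w. Qed.

End Triangle.

Lemma phi_o_in : phi o_in = o.
Proof.
by rewrite /o_in /pphi alphaK // -[sigma _]/(spoke k.-1.+1) prednK ?degree_w_gt0 ?spoke_k.
Qed.

Lemma outer_o_in : outer o_in.
Proof. by rewrite -(outer_phi gG) phi_o_in. Qed.

Lemma head_o_in : head o_in = w.
Proof. by rewrite head_alpha // tail_spoke. Qed.

Lemma kept_alpha d : kept (alpha d) = kept d.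
Proof. by rewrite /kept head_alpha // andbC. Qed.

Lemma o_not_kept : ~~ kept o.
Proof. by rewrite /kept tail_o eqxx. Qed.

Lemma o_in_not_kept : ~~ kept o_in.
Proof. by rewrite /kept head_o_in eqxx andbF. Qed.

Lemma o_in_neq_o : o_in != o.
Proof. by apply/eqP => E; have := tail_neq_head gG o; rewrite -{2}E head_o_in tail_o eqxx. Qed.

Lemma not_kept_spoke d : ~~ kept d ->
  (exists2 i, i < k & d = spoke i) \/ (exists2 i, i < k & d = alpha (spoke i)).
Proof.
rewrite /kept negb_and !negbK => /orP [] /eqP td; first by left; apply: spoke_of_tail.
by right; have [i ik Ei] := spoke_of_tail td; exists i; rewrite // -Ei alphaK.
Qed.

Lemma outer_not_kept d : ~~ kept d -> outer d -> d = o \/ d = o_in.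
Proof.
case/not_kept_spoke => [[i ik ->]|[i ik ->]] Od.
  by left; move: Od; rewrite outer_spoke // => /eqP ->.
right; congr (alpha (spoke _)); move: Od; rewrite -(outer_phi gG) /pphi alphaK //.
rewrite -[sigma _]/(spoke i.+1).
by case: (ltngtP i.+1 k) => [lt|gt|<- //]; [rewrite outer_spoke | lia].
Qed.

(* A passage [nbr j -> w -> nbr i] is replaced by the rims between [nbr j]
   and [nbr i]; since the triangles at [w] are directed 3-cycles, this costs
   no more. *)
Lemma detour_at_w i j : i < k -> j < k -> exists r,
  [/\ all kept r, is_walk G (nbr j) (nbr i) r &
      dlength G r <= dcost (alpha (spoke j)) + dcost (spoke i)].
Proof.
move=> ik jk; have c1 := dcost_gt0 (alpha (spoke j)); have c2 := dcost_gt0 (spoke i).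
have [->|ij] := eqVneq i j; first by exists [::]; rewrite /= eqxx.
have [ji|ji] := eqVneq j i.+1.
  subst j; exists [:: rim i.+1]; rewrite /= tail_rim head_rim // kept_rim // !eqxx.
  by rewrite dlength_seq1; have := dcost_le2 (rim i.+1); split => //; lia.
have [ij1|ij1] := eqVneq i j.+1.
  subst i; exists [:: alpha (rim j.+1)].
  rewrite /= head_alpha // tail_alpha tail_rim head_rim //.
  rewrite kept_alpha kept_rim // !eqxx dlength_seq1.
  by have := dcost_le2 (alpha (rim j.+1)); split => //; lia.
have [[? ?]|[? ?]] : (i = 0 /\ j = 2) \/ (i = 2 /\ j = 0).
  by move: ij ji ij1; case: i ik {c2} => [|[|[|i]]] ik; case: j jk {c1} => [|[|[|j]]] jk //=;
     rewrite ?eqxx //; lia.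
all: subst i j; have k1 : 1 < k by lia.
- exists [:: rim 2; rim 1].
  rewrite /= !tail_rim (head_rim (i:=2)) // (head_rim (i:=1)) // !kept_rim // !eqxx.
  split => //; rewrite dlength_cons dlength_seq1 /dcost orient_alpha //.
  rewrite !orient_rim // (orient_spoke_pred (i:=1)) // (orient_spoke_pred (i:=2)) //.
  by case: (orient (spoke 2)).
- exists [:: alpha (rim 1); alpha (rim 2)].
  rewrite /= !head_alpha // !tail_alpha !tail_rim (head_rim (i:=2)) // (head_rim (i:=1)) //.
  rewrite !kept_alpha !kept_rim // !eqxx.
  split => //; rewrite dlength_cons dlength_seq1 /dcost !orient_alpha //.
  rewrite !orient_rim // (orient_spoke_pred (i:=1)) // (orient_spoke_pred (i:=2)) //.
  by case: (orient (spoke 2)).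
Qed.

Lemma walk_avoiding_w x y q : x != w -> y != w -> is_walk G x y q ->
  exists q', [/\ all kept q', is_walk G x y q' & dlength G q' <= dlength G q].
Proof.
move: {2}(size q) (leqnn (size q)) => n; elim: n q x => [|n IH] [|d q] x //= sq xw yw;
  try by exists [::].
case/andP=> /eqP tx W.
have [Kd|] := boolP (kept d).
  have [q' [K' W' L']] := IH q _ sq (proj2 (andP Kd)) yw W.
  by exists (d :: q'); rewrite /= Kd K' tx eqxx W' !dlength_cons; split => //; lia.
rewrite /kept tx xw /= negbK => /eqP hd.
case: q sq W => [|d2 q] sq; first by move: yw => /[swap] /= /eqP <-; rewrite hd eqxx.
case/andP=> /eqP; rewrite hd => /spoke_of_tail [i ik ->] W.
have [j jk Ej] := spoke_of_tail (d := alpha d) hd.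
have [q' [K' W' L']] := IH q _ (ltnW sq) (nbr_neq_w i) yw W.
have [r [Kr Wr Lr]] := detour_at_w ik jk.
have xj : x = nbr j by rewrite -tx -(head_alpha gG) Ej.
rewrite -Ej alphaK // in Lr.
exists (r ++ q'); rewrite all_cat Kr K' xj (walk_cat Wr W') dlength_cat !dlength_cons.
by split => //; lia.
Qed.

Definition Vw : finType := {v : V | v != w}.
Definition Dw : finType := {d : D | kept d}.

Lemma kept_tail d : kept d -> tail d != w.
Proof. by case/andP. Qed.

(* Rotation around a vertex of [G - w]; as the map is simple, at most one
   dart there points to [w], so one skip suffices. *)
Definition sigma_skip (d : D) : D := if kept (sigma d) then sigma d else sigma (sigma d).

Lemma tail_sigma_skip d : tail (sigma_skip d) = tail d.
Proof. by rewrite /sigma_skip; case: ifP; rewrite !(tail_sigma gG). Qed.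

Lemma kept_sigma_skip d : kept d -> kept (sigma_skip d).
Proof.
move=> Kd; rewrite /sigma_skip; case: ifPn => // Ks.
have ts := tail_sigma gG d; have tw := kept_tail Kd.
have hs : head (sigma d) = w by apply/eqP; move: Ks; rewrite /kept ts tw negbK.
rewrite /kept !(tail_sigma gG) tw /=; apply/eqP => hss.
have E : sigma (sigma d) = sigma d by apply: (dart_ends_inj gG); rewrite ?(tail_sigma gG) ?hss.
by move: Ks; rewrite (sigma_inj gG E) Kd.
Qed.

Definition tail_del (d : Dw) : Vw := Sub (tail (val d)) (kept_tail (valP d)).
Definition alpha_del (d : Dw) : Dw := insubd d (alpha (val d)).
Definition sigma_del (d : Dw) : Dw := insubd d (sigma_skip (val d)).
Definition del_map (o' : Dw) : plane_digraph :=
  @PlaneDigraph Vw Dw tail_del alpha_del sigma_del (fun d => orient (val d)) o'.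

Section DeletedMap.
Variable o' : Dw.
Local Notation Gw := (del_map o').

Lemma val_tail_del d : val (ptail Gw d) = tail (val d).
Proof. by []. Qed.

Lemma val_alpha_del d : val (palpha Gw d) = alpha (val d).
Proof. by rewrite /= /alpha_del val_insubd kept_alpha (valP d). Qed.

Lemma val_sigma_del d : val (psigma Gw d) = sigma_skip (val d).
Proof. by rewrite /= /sigma_del val_insubd kept_sigma_skip // (valP d). Qed.

Lemma val_head_del d : val (phead Gw d) = head (val d).
Proof. by rewrite /phead val_tail_del val_alpha_del. Qed.

Lemma walk_del x y p : is_walk Gw x y p = is_walk G (val x) (val y) (map val p).
Proof.
elim: p x => [|d p IH] x /=; first by rewrite val_eqE.
by rewrite IH -val_eqE val_tail_del val_head_del.
Qed.

Lemma dlength_del p : dlength Gw p = dlength G (map val p).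
Proof. by elim: p => //= d p IH; rewrite !dlength_cons IH. Qed.

Lemma walk_del_lift x y q : all kept q -> is_walk G (val x) (val y) q ->
  exists2 p, map val p = q & is_walk Gw x y p.
Proof.
elim: q x => [|d q IH] x /=.
  by move=> _ /eqP xy; exists [::] => //=; apply/eqP/val_inj.
case/andP=> Kd Kq /andP [/eqP tx W].
pose hd : Vw := Sub (head d) (proj2 (andP Kd)).
have [p <- Wp] := IH hd Kq W; exists ((Sub d Kd : Dw) :: p) => //=.
have -> : tail_del (alpha_del (Sub d Kd)) = hd by apply: val_inj; apply: val_head_del.
by rewrite Wp andbT -val_eqE /= tx.
Qed.

Lemma val_iter_sigma_del n d : val (iter n (psigma Gw) d) = iter n sigma_skip (val d).
Proof. by elim: n => // n IH; rewrite !iterS val_sigma_del IH. Qed.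

Lemma del_alphaK : involutive (palpha Gw).
Proof. by move=> d; apply: val_inj; rewrite !val_alpha_del alphaK. Qed.

Lemma del_sigma_inj : injective (psigma Gw).
Proof.
move=> a b /(congr1 val); rewrite !val_sigma_del /sigma_skip => E; apply: val_inj.
have Ka := valP a; have Kb := valP b.
move: E; case: ifP => Ha; case: ifP => Hb /(sigma_inj gG) E //.
- by move: Ka; rewrite E Hb.
- by move: Kb; rewrite -E Ha.
- exact: (sigma_inj gG E).
Qed.

Lemma iter_sigma_skip n x : kept x -> kept (iter n sigma x) ->
  exists m, iter m sigma_skip x = iter n sigma x.
Proof.
move=> Kx; elim/ltn_ind: n => -[|n] IH Kn; first by exists 0.
have [Kn1|nKn1] := boolP (kept (iter n sigma x)).
  by have [m Em] := IH n (ltnSn n) Kn1; exists m.+1; rewrite iterS Em /sigma_skip -iterS Kn.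
case: n IH Kn nKn1 => [|n] IH Kn nKn1; first by rewrite /= Kx in nKn1.
have tw : tail (iter n.+1 sigma x) != w by rewrite tail_iter_sigma // kept_tail.
have [Kn2|] := boolP (kept (iter n sigma x)).
  have [m Em] := IH n (leqW (ltnSn n)) Kn2.
  by exists m.+1; rewrite iterS Em /sigma_skip -iterS (negbTE nKn1).
rewrite /kept tail_iter_sigma // kept_tail //= negbK => /eqP hn.
have hn1 : head (iter n.+1 sigma x) = w by apply/eqP; move: nKn1; rewrite /kept tw negbK.
have E : iter n.+1 sigma x = iter n sigma x.
  by apply: (dart_ends_inj gG); rewrite ?tail_iter_sigma ?hn ?hn1.
by move: Kn; rewrite iterS E -iterS (negbTE nKn1).
Qed.

Lemma del_tail_fconnect d d' : ptail Gw d = ptail Gw d' -> fconnect (psigma Gw) d d'.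
Proof.
move=> /(congr1 val) /(tail_fconnect gG) F.
have [m Em] := @iter_sigma_skip (findex sigma (val d) (val d')) _ (valP d)
  (etrans (congr1 kept (iter_findex F)) (valP d')).
have -> : d' = iter m (psigma Gw) d.
  by apply: val_inj; rewrite val_iter_sigma_del Em iter_findex.
exact: fconnect_iter.
Qed.

Lemma del_tail_sigma d : ptail Gw (psigma Gw d) = ptail Gw d.
Proof. by apply: val_inj; rewrite val_tail_del val_sigma_del tail_sigma_skip. Qed.

Lemma del_orient_alpha d : porient Gw (palpha Gw d) = ~~ porient Gw d.
Proof. by rewrite /= val_alpha_del orient_alpha. Qed.

Lemma del_tail_neq_head d : ptail Gw d != phead Gw d.
Proof. by rewrite -val_eqE val_tail_del val_head_del tail_neq_head. Qed.

Lemma del_dart_ends_inj d d' :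
  ptail Gw d = ptail Gw d' -> phead Gw d = phead Gw d' -> d = d'.
Proof.
move=> /(congr1 val) t_dd' /(congr1 val); rewrite !val_head_del => h_dd'.
by apply: val_inj; apply: (dart_ends_inj gG).
Qed.

Lemma del_walk_connected u v : exists q, is_walk Gw u v q.
Proof.
have [q W] := walk_connected gG (val u) (val v).
have [q' [K W' _]] := walk_avoiding_w (valP u) (valP v) W.
by have [p _ Wp] := walk_del_lift K W'; exists p.
Qed.

Definition phi_skip (x : D) : D := if kept (phi x) then phi x else sigma (phi x).

Lemma val_phi_del d : val (pphi Gw d) = phi_skip (val d).
Proof. by rewrite /pphi val_sigma_del val_alpha_del. Qed.

Lemma val_iter_phi_del n d : val (iter n (pphi Gw) d) = iter n phi_skip (val d).
Proof. by elim: n => // n IH; rewrite !iterS val_phi_del IH. Qed.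

End DeletedMap.

Lemma sigma_fixed_unique x : sigma x = x -> forall d, tail d = tail x -> d = x.
Proof.
move=> sx d /esym/(tail_fconnect gG) F.
by rewrite -(iter_findex F) iter_fix.
Qed.

(* Excludes the single-edge map, whose deletion of [w] leaves no dart. *)
Hypothesis other_vertex : exists u, (u != w) && (u != nbr 0).

Lemma walk_from_pendant_edge : k = 1 -> sigma (alpha o) = alpha o ->
  forall q v u, is_walk G v u q -> (v == w) || (v == nbr 0) -> (u == w) || (u == nbr 0).
Proof.
move=> k1 sa; elim=> [|d q IH] v u /=; first by move=> /eqP ->.
case/andP=> /eqP tv W Hv; apply: IH W _.
case/orP: Hv => /eqP vE.
  have [i] := spoke_of_tail (etrans tv vE); rewrite k1 ltnS leqn0 => /eqP -> ->.
  by rewrite eqxx orbT.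
by rewrite (sigma_fixed_unique sa (etrans tv vE)) head_alpha // tail_o eqxx.
Qed.

Lemma kept_phi_o : kept (phi o).
Proof.
rewrite /kept (tail_phi gG) -/(nbr 0) nbr_neq_w /=; apply/negP => /eqP hw.
have phi_o : phi o = alpha o.
  have : ~~ kept (phi o) by rewrite /kept hw eqxx andbF.
  case/not_kept_spoke => [[i ik Ei]|[j jk Ej]].
    by have := nbr_neq_w 0; rewrite /nbr -(tail_phi gG) Ei tail_spoke eqxx.
  have nbr_j : nbr j = nbr 0 by rewrite /nbr -tail_alpha -Ej (tail_phi gG).
  by rewrite Ej (nbr_inj jk degree_w_gt0 nbr_j).
have sa : sigma (alpha o) = alpha o := phi_o.
have [k1|k2] : k = 1 \/ 1 < k by have := degree_w_gt0; lia.
  have [u /andP [uw u0]] := other_vertex; have [q W] := walk_connected gG (nbr 0) u.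
  suff : (u == w) || (u == nbr 0) by rewrite (negbTE uw) (negbTE u0).
  by apply: walk_from_pendant_edge k1 sa _ _ _ W _; rewrite eqxx orbT.
have E : alpha (rim 1) = alpha o by apply: sigma_fixed_unique; rewrite // tail_alpha head_rim.
by have := nbr_neq_w 1; rewrite -(tail_rim 1) (alpha_inj gG E) tail_o eqxx.
Qed.

Lemma phi_skip_kept x : kept (phi x) -> phi_skip x = phi x.
Proof. by rewrite /phi_skip => ->. Qed.

Lemma phi_skip_not_kept x : kept x -> ~~ kept (phi x) ->
  exists2 j, j < k & phi x = alpha (spoke j) /\ phi_skip x = phi (spoke j).
Proof.
move=> Kx nK; case/not_kept_spoke: (nK) => [[i ik Ei]|[j jk Ej]].
  by move: Kx; rewrite /kept -(tail_phi gG) Ei tail_spoke eqxx andbF.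
by exists j; rewrite // /phi_skip (negbTE nK) Ej.
Qed.

Definition rim_darts : seq D := [seq rim i | i <- iota 1 k.-1].
Definition new_outer (x : D) : bool := outer x || (x \in rim_darts).

Lemma rim_dartsP x : reflect (exists2 i, 0 < i < k & x = rim i) (x \in rim_darts).
Proof.
apply: (iffP mapP) => [[i Hi ->]|[i Hi ->]]; exists i; rewrite // ?mem_iota in Hi *; lia.
Qed.

Lemma kept_rim_darts x : x \in rim_darts -> kept x.
Proof. by case/rim_dartsP => i /andP [i0 ik] ->; apply: kept_rim. Qed.

Lemma rim_darts_interior x : x \in rim_darts -> interior_dart G x.
Proof. by case/rim_dartsP => i /andP [i0 ik] ->; apply: interior_rim. Qed.

Lemma uniq_rim_darts : uniq rim_darts.
Proof.
rewrite map_inj_in_uniq ?iota_uniq // => i j; rewrite !mem_iota => Hi Hj E.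
by apply: spoke_inj; [lia | lia | apply: (phi_inj gG)].
Qed.

Lemma size_rim_darts : size rim_darts = k.-1.
Proof. by rewrite size_map size_iota. Qed.

Lemma new_outer_phi_spoke j : j < k -> new_outer (phi (spoke j)).
Proof.
case: j => [|j] jk; first by rewrite /new_outer (outer_phi gG) outer_o.
by apply/orP; right; apply/rim_dartsP; exists j.+1.
Qed.

Lemma new_outer_at_nbr j : j < k -> exists2 x, kept x && new_outer x & tail x = nbr j.
Proof.
move=> jk; exists (phi (spoke j)); last exact: tail_phi.
rewrite new_outer_phi_spoke // andbT.
by case: j jk => [|j] jk; [apply: kept_phi_o | apply: kept_rim].
Qed.

Lemma new_outer_phi_skip x : kept x -> new_outer x -> new_outer (phi_skip x).
Proof.
move=> Kx; case/orP => [Ox|/rim_dartsP [i /andP [i0 ik] ->]].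
  have [Kp|nKp] := boolP (kept (phi x)).
    by rewrite phi_skip_kept // /new_outer (outer_phi gG) Ox.
  by have [j jk [_ ->]] := phi_skip_not_kept Kx nKp; apply: new_outer_phi_spoke.
have nK : ~~ kept (phi (rim i)) by rewrite phi_rim // kept_alpha /kept tail_spoke eqxx.
rewrite /phi_skip (negbTE nK) phi_rim //; apply: new_outer_phi_spoke; lia.
Qed.

Lemma not_new_outer_phi x : kept x -> ~~ new_outer x ->
  kept (phi x) /\ ~~ new_outer (phi x).
Proof.
move=> Kx; rewrite /new_outer negb_or => /andP [nOx nRx].
have Kp : kept (phi x).
  apply: contraT => nKp; have [j jk [E _]] := phi_skip_not_kept Kx nKp.
  have [jk1|jk1] : j.+1 < k \/ j.+1 = k by lia.
    case/negP: nRx; apply/rim_dartsP; exists j.+1; first by rewrite jk1.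
    by apply: (phi_inj gG); rewrite phi_rim.
  by move: nOx; rewrite -(outer_phi gG) E -/o_in (_ : j = k.-1) ?outer_o_in //; lia.
split => //; rewrite (outer_phi gG) (negbTE nOx) /=; apply/rim_dartsP => -[i /andP [i0 ik]].
by move/(phi_inj gG) => Ex; move: Kx; rewrite /kept Ex tail_spoke eqxx.
Qed.

Lemma outer_reached x : kept x -> outer x -> exists m, iter m phi_skip (phi o) = x.
Proof.
move=> + Ox; case: (findex phi o x) (iter_findex (outer_fconnect gG outer_o Ox)) => [|n] <-.
  by rewrite /= (negbTE o_not_kept).
rewrite iterSr; elim: n => [|n IH] Kn; first by exists 0.
set t := iter n phi (phi o).
have Ot : outer t by rewrite /t; elim: n {IH Kn t} => [|n IHn]; rewrite /= (outer_phi gG).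
have [Kt|nKt] := boolP (kept t).
  by have [m Em] := IH Kt; exists m.+1; rewrite iterS Em phi_skip_kept.
case: (outer_not_kept nKt Ot) => Et; first by exists 0; rewrite iterS -/t Et.
by move: Kn; rewrite iterS -/t Et phi_o_in (negbTE o_not_kept).
Qed.

Lemma kept_finv_o_in : kept (finv phi o_in).
Proof.
have py : phi (finv phi o_in) = o_in by rewrite f_finv //; apply: phi_inj.
have Oy : outer (finv phi o_in) by rewrite -(outer_phi gG) py outer_o_in.
apply: contraT => nK; case: (outer_not_kept nK Oy) => Ey; move: py; rewrite Ey.
  by move=> py; have := kept_phi_o; rewrite py (negbTE o_in_not_kept).
by rewrite phi_o_in => /eqP; rewrite eq_sym (negbTE o_in_neq_o).
Qed.

Lemma rim_reached x : x \in rim_darts -> exists m, iter m phi_skip (phi o) = x.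
Proof.
case/rim_dartsP => i /andP [i0 ik] ->; set y := finv phi o_in.
have py : phi y = o_in by rewrite /y f_finv //; apply: phi_inj.
have Oy : outer y by rewrite -(outer_phi gG) py outer_o_in.
have [m Em] := outer_reached kept_finv_o_in Oy.
have Ry : phi_skip y = rim k.-1 by rewrite /phi_skip py (negbTE o_in_not_kept).
have [->|->] : i = k.-1 \/ i = k.-2 by lia.
  by exists m.+1; rewrite iterS Em Ry.
have nK : ~~ kept (phi (rim k.-1)).
  by rewrite phi_rim ?kept_alpha /kept ?tail_spoke ?eqxx //; lia.
by exists m.+2; rewrite !iterS Em Ry /phi_skip (negbTE nK) phi_rim //; lia.
Qed.

Definition o_del : Dw := Sub (phi o) kept_phi_o.
Local Notation Gw := (del_map o_del).

Lemma outer_del d : outer_dart Gw d = new_outer (val d).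
Proof.
apply/idP/idP => [F|N].
  rewrite -(iter_findex F) val_iter_phi_del.
  elim: (findex _ _ _) => [|n IH]; first by rewrite /new_outer (outer_phi gG) outer_o.
  have := valP (iter n (pphi Gw) o_del); rewrite val_iter_phi_del => Kn.
  by rewrite iterS; apply: new_outer_phi_skip.
have [m Em] : exists m, iter m phi_skip (phi o) = val d.
  by case/orP: N => [/(outer_reached (valP d))|/rim_reached].
have -> : d = iter m (pphi Gw) o_del by apply: val_inj; rewrite val_iter_phi_del.
exact: fconnect_iter.
Qed.

Lemma card_kept_new_outer :
  #|[pred x | kept x && new_outer x]| = #|[pred x | kept x && outer x]| + k.-1.
Proof.
rewrite -size_rim_darts -(card_uniqP uniq_rim_darts).
rewrite -(cardUI [pred x | kept x && outer x] (mem rim_darts)).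
have -> : #|[predI [pred x | kept x && outer x] & mem rim_darts]| = 0.
  apply: eq_card0 => x; rewrite !inE; apply/negP => /andP [/andP [_ Ox] /rim_darts_interior].
  by rewrite /interior_dart Ox.
rewrite addn0; apply: eq_card => x; rewrite !inE /new_outer.
by case Rx: (x \in rim_darts); rewrite ?orbF // (kept_rim_darts Rx) !orbT.
Qed.

Lemma card_kept_outer : #|[pred x | kept x && outer x]| + 2 = #|[pred x | outer x]|.
Proof.
rewrite -(cardID [pred x | kept x] [pred x | outer x]).
congr (_ + _); first by apply: eq_card => x; rewrite !inE andbC.
have := card2 o o_in; rewrite eq_sym o_in_neq_o => <-; apply: eq_card => x; rewrite !inE.
apply/orP/andP => [[] /eqP ->|[/outer_not_kept + Ox]].
- by rewrite o_not_kept outer_o.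
- by rewrite o_in_not_kept outer_o_in.
- by case/(_ Ox) => ->; rewrite eqxx ?orbT; [left|right].
Qed.

Lemma card_kept : #|[pred x | kept x]| + 2 * k = #|D|.
Proof.
rewrite -(cardC [pred x | kept x]); congr (_ + _).
have -> : #|[predC [pred x | kept x]]| =
          #|[predU [pred x | tail x == w] & [pred x | head x == w]]|.
  by apply: eq_card => x; rewrite !inE /kept negb_and !negbK.
have I0 : #|[predI [pred x | tail x == w] & [pred x | head x == w]]| = 0.
  apply: eq_card0 => x; rewrite !inE; apply/negP => /andP [/eqP tx /eqP hx].
  by have := tail_neq_head gG x; rewrite tx hx eqxx.
have := cardUI [pred x | tail x == w] [pred x | head x == w]; rewrite I0 addn0 => ->.
rewrite mul2n -addnn; congr (_ + _).
rewrite -(card_image (alpha_inj gG)); apply: eq_card => x; rewrite !inE.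
apply/eqP/imageP => [tx|[y]]; last by rewrite inE => /eqP hy ->.
by exists (alpha x); rewrite ?alphaK // inE head_alpha // tx.
Qed.

Lemma card_vertices_del : #|pV Gw| + 1 = #|V|.
Proof.
rewrite /= card_sig (eq_card (_ : [pred v | v != w] =i predC1 w)) // cardC1 addn1.
by rewrite prednK //; apply/card_gt0P; exists w.
Qed.

Lemma card_darts_del : #|pD Gw| + 2 * k = #|D|.
Proof. by rewrite -card_kept /= card_sig. Qed.

Lemma card_outer_del :
  #|[pred d | outer_dart Gw d]| + 2 = #|[pred x | outer x]| + k.-1.
Proof.
have -> : #|[pred d | outer_dart Gw d]| = #|[pred x | kept x && new_outer x]|.
  by rewrite -card_sig_pred; apply: eq_card => d; rewrite !inE outer_del.
by rewrite card_kept_new_outer -card_kept_outer; lia.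
Qed.

Lemma del_euler_relation :
  6 * #|pV Gw| = 6 + #|pD Gw| + 2 * #|[pred d | outer_dart Gw d]|.
Proof.
have := euler_relation gG; have := card_vertices_del; have := card_darts_del.
have := card_outer_del; have := degree_w_gt0.
move: #|pV Gw| #|pD Gw| #|[pred d | outer_dart Gw d]| => *.
move: #|V| #|D| #|[pred x | outer x]| => *; lia.
Qed.

Lemma del_interior_triangle d : interior_dart Gw d ->
  order (pphi Gw) d = 3 /\ porient Gw (pphi Gw d) = porient Gw d.
Proof.
rewrite /interior_dart outer_del => nN; set x := val d.
have Ix : interior_dart G x by move: nN; rewrite /new_outer negb_or => /andP [].
have [K1 nN1] := not_new_outer_phi (valP d) nN.
have [K2 _] := not_new_outer_phi K1 nN1.
have V1 : val (pphi Gw d) = phi x by rewrite val_phi_del phi_skip_kept.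
have V2 : val (pphi Gw (pphi Gw d)) = phi (phi x) by rewrite val_phi_del V1 phi_skip_kept.
have V3 : pphi Gw (pphi Gw (pphi Gw d)) = d.
  by apply: val_inj; rewrite val_phi_del V2 phi_skip_kept phi3 // (valP d).
have [o3 or_phi] := interior_triangle gG Ix.
split; last by rewrite /= V1.
apply: (@order_cycle _ _ [:: d; pphi Gw d; pphi Gw (pphi Gw d)]); rewrite ?mem_head //.
  by rewrite /= !eqxx /= andbT; apply/eqP; exact: V3.
rewrite -(map_inj_uniq val_inj) /= V1 V2 -/x.
by have := orbit_uniq phi x; rewrite /orbit o3.
Qed.

Section InteriorVertex.
Variable v : Vw.
Hypothesis Iv : interior_vertex Gw v.

Lemma new_outer_tail_neq x : kept x -> new_outer x -> tail x != val v.
Proof.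
move=> Kx Nx; have := forallP Iv (Sub x Kx).
by rewrite outer_del /= Nx /= -val_eqE.
Qed.

Lemma kept_at_interior x : tail x = val v -> kept x.
Proof.
move=> tx; apply: contraT => /not_kept_spoke [[i ik Ex]|[j jk Ex]].
  by have := valP v; rewrite -tx Ex tail_spoke eqxx.
have [y /andP [Ky Ny] ty] := new_outer_at_nbr jk.
by have := new_outer_tail_neq Ky Ny; rewrite ty -tx Ex eqxx.
Qed.

Lemma del_interior_degree : 6 <= degree Gw v.
Proof.
have Iv' : interior_vertex G (val v).
  apply/forallP => x; apply/implyP => Ox; apply/eqP => tx.
  have Nx : new_outer x by rewrite /new_outer Ox.
  by have := new_outer_tail_neq (kept_at_interior tx) Nx; rewrite tx eqxx.
suff -> : degree Gw v = degree G (val v) by apply: (interior_degree gG).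
rewrite /degree.
have -> : #|[pred d : pD Gw | ptail Gw d == v]| = #|[pred x : Dw | tail (val x) == val v]|.
  by apply: eq_card => d; rewrite !inE -val_eqE.
apply: etrans (card_sig_pred kept (fun x => tail x == val v)) _.
apply: eq_card => x; rewrite !inE.
by case: eqP => [/kept_at_interior ->|]; rewrite ?andbF.
Qed.

End InteriorVertex.

Lemma npc_map_del : npc_map Gw.
Proof.
split; by [ apply: del_alphaK | apply: del_sigma_inj | apply: del_tail_sigma
  | apply: del_tail_fconnect | apply: del_orient_alpha | apply: del_tail_neq_head
  | apply: del_dart_ends_inj | apply: del_walk_connected | apply: del_euler_relation
  | apply: del_interior_triangle | apply: del_interior_degree ].
Qed.

End RemovableVertex.

Definition vertex_removal (G G' : plane_digraph) (w : pV G) : Prop :=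
  #|pV G'| < #|pV G| /\
  exists (fv : pV G' -> pV G) (fd : pD G' -> pD G),
  [/\ forall u, u != w -> exists a, fv a = u,
      forall a b p, is_walk G' a b p -> is_walk G (fv a) (fv b) (map fd p) &
      forall a b q, is_walk G (fv a) (fv b) q ->
        exists2 p, is_walk G' a b p & dlength G' p <= dlength G q].

Lemma removable_vertex_removal G (w x y : pV G) : npc_map G -> removable w ->
  w != x -> w != y -> x != y -> exists2 G', npc_map G' & vertex_removal G' w.
Proof.
move=> gG /andP [/eqP od1 deg_w] wx wy xy.
have /card_gt0P [o] : 0 < outer_degree w by rewrite od1.
rewrite inE => /andP [/eqP tail_o outer_o].
have outer_at_w d : ptail G d = w -> outer_dart G d -> d = o.
  by move=> td Od; apply: (elimT card_le1_eqP (eq_leq od1)); rewrite inE ?td ?tail_o eqxx.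
have other : exists u, (u != w) && (u != nbr o 0).
  have [x0|] := eqVneq x (nbr o 0); last by exists x; rewrite eq_sym wx.
  by exists y; rewrite eq_sym wy -x0 eq_sym xy.
exists (del_map (o_del gG tail_o outer_o outer_at_w deg_w other)).
  exact: npc_map_del.
split; first by have := card_vertices_del gG tail_o outer_o outer_at_w deg_w other; lia.
exists val, val; split.
- by move=> u uw; exists (Sub u uw).
- by move=> a b p; rewrite walk_del.
- move=> a b q W.
  have [q' [K W' L]] := walk_avoiding_w gG tail_o outer_o outer_at_w deg_w (valP a) (valP b) W.
  have [p Ep Wp] := walk_del_lift gG _ K W'.
  by exists p; rewrite // dlength_del Ep.
Qed.

(** * Round trips *)

Definition round_trip_bound (G : plane_digraph) : Prop :=
  forall x y q r, is_walk G x y q -> is_walk G y x r ->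
  exists2 p, is_walk G x y p & 3 * size p <= dlength G q + dlength G r.

Lemma round_trip_removal G G' (w x y : pV G) q r :
  vertex_removal G' w -> round_trip_bound G' -> x != w -> y != w ->
  is_walk G x y q -> is_walk G y x r ->
  exists2 p, is_walk G x y p & 3 * size p <= dlength G q + dlength G r.
Proof.
case=> _ [fv [fd [onto push pull]]] RT xw yw.
have [a <-] := onto x xw; have [b <-] := onto y yw.
move=> /pull [q' Wq' Lq] /pull [r' Wr' Lr]; have [p' Wp' Lp'] := RT _ _ _ _ Wq' Wr'.
by exists (map fd p'); [apply: push | rewrite size_map; lia].
Qed.

Section RoundTripStep.
Variable G : plane_digraph.
Hypothesis gG : npc_map G.
Hypothesis round_trip_smaller :
  forall G' (w : pV G), npc_map G' -> vertex_removal G' w -> round_trip_bound G'.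
Local Notation head := (phead G).

Lemma round_trip_leaf x y q r : x != y -> degree G x = 1 -> outer_degree x = 1 ->
  is_walk G x y q -> is_walk G y x r ->
  exists2 p, is_walk G x y p & 3 * size p <= dlength G q + dlength G r.
Proof.
move=> xy deg1 od1; case: q => [|d q] /=; first by move/eqP=> xy'; rewrite xy' eqxx in xy.
case/andP=> /eqP tail_d Wq; case/lastP: r => [|r l]; first by move/eqP=> yx; rewrite yx eqxx in xy.
rewrite -cats1 => /walk_cat_split [m [Wr /= /andP [/eqP tail_l /eqP head_l]]].
have l_d : palpha G l = d.
  by apply: (elimT card_le1_eqP (eq_leq deg1)); rewrite inE ?tail_alpha ?head_l ?tail_d.
have m_d : m = head d by rewrite -tail_l -(head_alpha gG) l_d.
rewrite m_d in Wr; rewrite dlength_cat dlength_cons dlength_seq1.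
have := dcost_alpha gG l; rewrite l_d => cost_dl.
have [hy|hy] := eqVneq (head d) y.
  by exists [:: d]; rewrite /= ?tail_d ?hy ?eqxx //; lia.
have Rx : removable x by rewrite /removable od1 deg1.
have xh : x != head d by rewrite -tail_d tail_neq_head.
have [G' gG' R] := removable_vertex_removal gG Rx xh xy hy.
have [p Wp Lp] := round_trip_removal R (round_trip_smaller gG' R)
  (contra_neq esym xh) (contra_neq esym xy) Wq Wr.
by exists (d :: p); rewrite /= ?tail_d ?eqxx //=; lia.
Qed.

Lemma round_trip_step : round_trip_bound G.
Proof.
move=> x y q r Wq Wr; have [<-|xy] := eqVneq x y; first by exists [::]; rewrite /= ?eqxx.
case: (removable_or_leaf gG xy) => [[w [Rw wx wy]]|[deg1 od1]]; last exact: round_trip_leaf.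
have [G' gG' R] := removable_vertex_removal gG Rw wx wy xy.
by apply: round_trip_removal R (round_trip_smaller gG' R) _ _ Wq Wr; rewrite eq_sym.
Qed.

End RoundTripStep.

Lemma npc_map_round_trip_bound G : npc_map G -> round_trip_bound G.
Proof.
move: {2}#|pV G| (leqnn #|pV G|) => n; elim: n G => [|n IH] G VG gG.
  by move=> x; move: VG; rewrite leqn0 => /eqP/card0_eq/(_ x).
apply: round_trip_step => // G' w gG' [lt_V _]; apply: IH => //; lia.
Qed.

Theorem proposition9p7 (G : plane_digraph) (u v : pV G) (p : seq (pD G)) :
  is_CAT0_planar G -> comb_geodesic G u v p -> is_delta G u v (dlength G p).
Proof.
move=> /CAT0_planar_npc_map gG [Wp geodesic]; split=> [|q Wq]; first by exists p.
have [p' Wp' Lp'] := npc_map_round_trip_bound gG Wq (walk_rev gG Wp).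
by have := geodesic _ Wp'; have := dlength_rev_walk gG p; lia.
Qed.
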